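(* Let $A$ be a synaptic algebra, $p,q\in P$, $r:=(p\vee q)\wedge(p\vee q^{\perp})\wedge(p^{\perp}\vee q)\wedge(p^{\perp}\vee q^{\perp})$, $r_p:=p\wedge(p^{\perp}\vee q)\wedge(p^{\perp}\vee q^{\perp})$ and $r_q:=q\wedge(p\vee q^{\perp})\wedge(p^{\perp}\vee q^{\perp})$. Then $r_p=pr=rp=r\wedge p$ and $r_q=qr=rq=r\wedge q$ belong to $P[0,r]$, and $r_p$ and $r_q$ are in generic position in the synaptic algebra $rAr$; that is, $r_p\wedge r_q=r_p\wedge(r-r_q)=(r-r_p)\wedge r_q=(r-r_p)\wedge(r-r_q)=0$.
   Context: Synaptic algebra (Foulis): $R$ is a real linear associative algebra with unit $1$, and $A\subseteq R$ is a real linear subspace with $1\in A$. For $a,b\in A$ write $aCb$ iff $ab=ba$; $C(a):=\{b\in A: aCb\}$; $CC(a):=\{b\in A: bCd \text{ for all } d\in C(a)\}$. $A$ is a synaptic algebra with enveloping algebra $R$ iff: (SA1) $A$ is a partially ordered archimedean real linear space with positive cone $A^+$, $1$ is an order unit, $\|\cdot\|$ the order-unit norm; (SA2) $a\in A\Rightarrow a^2\in A^+$; (SA3) $a,b\in A^+\Rightarrow aba\in A^+$; (SA4) if $a\in A$, $b\in A^+$, $aba=0$ then $ab=ba=0$; (SA5) if $a\in A^+$ there is $b\in A^+\cap CC(a)$ with $b^2=a$; (SA6) for $a\in A$ there is $p=p^2\in A$ with $ab=0\Leftrightarrow pb=0$ for all $b\in A$; (SA7) if $1\le a$ there is $b\in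 A$ with $ab=ba=1$; (SA8) if $a,b\in A$, $a_1\le a_2\le\cdots$ are pairwise commuting elements of $C(b)$ with $\|a-a_n\|\to0$, then $a\in C(b)$. $A$ is nondegenerate. $P:=\{p\in A:p=p^2\}$ with the inherited order is an orthomodular lattice with $p^{\perp}:=1-p$, meet $\wedge$, join $\vee$. For $r\in P$, $rAr:=\{rar:a\in A\}=\{b\in A:b=br=rb\}$ is a synaptic algebra with unit $r$ (enveloping algebra $rRr$), whose projection lattice is $P[0,r]:=\{x\in P:x\le r\}$ with orthocomplement $x\mapsto r-x=x^{\perp}\wedge r$. Two projections $x,y$ of a synaptic algebra are in generic position iff $x\wedge y=x\wedge y'=x'\wedge y=x'\wedge y'=0$, where $'$ is the orthocomplement of that algebra. *)

From HB Require Import structures.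
From mathcomp Require Import all_boot all_order all_algebra.
From mathcomp Require Import boolp classical_sets reals.
From Stdlib Require Import ClassicalEpsilon.
Set Implicit Arguments. Unset Strict Implicit. Unset Printing Implicit Defensive.
Import Order.TTheory GRing.Theory Num.Theory.
Local Open Scope ring_scope.
Local Open Scope classical_set_scope.

Section Synaptic.
Variables (R : realType) (E : algType R).
(* A : the synaptic algebra (a subset of the enveloping algebra E);
   Pos : its positive cone A^+. *)
Variables (A Pos : {pred E}).

Definition sle (x y : E) : Prop := (y - x) \in Pos.

Definition scomm (a b : E) : Prop := a * b = b * a.
Definition C_ (a : E) : E -> Prop := fun b => b \in A /\ scomm a b.
Definition CC_ (a : E) : E -> Prop :=
  fun b => b \in A /\ forall d, C_ a d -> scomm b d.

Definition ounorm (a : E) : R :=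
  inf [set l : R | 0 <= l /\ sle (- (l *: 1)) a /\ sle a (l *: 1)].

Record synaptic : Prop := {
  sa_0 : (0 : E) \in A;
  sa_add : forall a b, a \in A -> b \in A -> a + b \in A;
  sa_scale : forall (k : R) a, a \in A -> k *: a \in A;
  sa_1 : (1 : E) \in A;
  sa_pos_sub : forall a, a \in Pos -> a \in A;
  sa_pos_add : forall a b, a \in Pos -> b \in Pos -> a + b \in Pos;
  sa_pos_scale : forall (k : R) a, 0 <= k -> a \in Pos -> k *: a \in Pos;
  sa_pos_anti : forall a, a \in Pos -> - a \in Pos -> a = 0;
  sa_archimedean : forall a b, a \in A -> b \in A ->
      (forall n : nat, sle (n%:R *: a) b) -> sle a 0;
  sa_order_unit : forall a, a \in A -> exists n : nat, sle a (n%:R *: 1);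
  sa2 : forall a, a \in A -> a * a \in Pos;
  sa3 : forall a b, a \in Pos -> b \in Pos -> a * b * a \in Pos;
  sa4 : forall a b, a \in A -> b \in Pos -> a * b * a = 0 ->
      a * b = 0 /\ b * a = 0;
  sa5 : forall a, a \in Pos -> exists b, b \in Pos /\ CC_ a b /\ b * b = a;
  sa6 : forall a, a \in A -> exists p, p \in A /\ p * p = p /\
      (forall b, b \in A -> (a * b = 0 <-> p * b = 0));
  sa7 : forall a, a \in A -> sle 1 a -> exists b, b \in A /\ a * b = 1 /\ b * a = 1;
  sa8 : forall (a b : E) (u : nat -> E), a \in A -> b \in A ->
      (forall n, C_ b (u n)) ->
      (forall m n, scomm (u m) (u n)) ->
      (forall n, sle (u n) (u n.+1)) ->
      (forall e : R, 0 < e -> exists N : nat, forall n, (N <= n)%N -> ounorm (a - u n) < e) ->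
      C_ b a;
  sa_nondeg : (1 : E) != 0
}.

Definition proj (p : E) : Prop := p \in A /\ p * p = p.
Definition pcompl (p : E) : E := 1 - p.

Definition is_glb (S : E -> Prop) (x y m : E) : Prop :=
  S m /\ sle m x /\ sle m y /\ forall z, S z -> sle z x -> sle z y -> sle z m.
Definition is_lub (S : E -> Prop) (x y m : E) : Prop :=
  S m /\ sle x m /\ sle y m /\ forall z, S z -> sle x z -> sle y z -> sle m z.

Definition meet_in (S : E -> Prop) (x y : E) : E := epsilon (inhabits 0) (is_glb S x y).
Definition join_in (S : E -> Prop) (x y : E) : E := epsilon (inhabits 0) (is_lub S x y).

Definition pmeet := meet_in proj.
Definition pjoin := join_in proj.

Definition Pint (r : E) : E -> Prop := fun x => proj x /\ sle x r.

(* generic position in rAr (meets in P[0,r], orthocomplement x |-> r - x) *)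
Definition generic_in (r x y : E) : Prop :=
  meet_in (Pint r) x y = 0 /\ meet_in (Pint r) x (r - y) = 0 /\
  meet_in (Pint r) (r - x) y = 0 /\ meet_in (Pint r) (r - x) (r - y) = 0.

End Synaptic.

From Pilot Require Import Defs.
From mathcomp Require Import all_boot all_order all_algebra.
From mathcomp Require Import reals.
From Stdlib Require Import ClassicalEpsilon.
Set Implicit Arguments. Unset Strict Implicit.
Import GRing.Theory Num.Theory.
Local Open Scope ring_scope.

(* Write p^1 = p, p^0 = 1 - p, and let c_ab = p^a /\ q^b be the four corners.
   They are pairwise orthogonal projections, each one below or orthogonal to p
   and to q, and by De Morgan the four joins in r are the projections 1 - c_ab;
   hence r = 1 - (c_00 + c_01 + c_10 + c_11).  So r commutes with p and q, and
   pr = p - p /\ q' - p /\ q = r_p (likewise for q).  In rAr, a projection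
   below both ar and br, with a in {p, p'} and b in {q, q'}, lies below the
   corner a /\ b, which r annihilates; so it is 0. *)

Section Synaptic.
Variables (R : realType) (E : algType R) (A Pos : {pred E}).
Hypothesis HA : synaptic A Pos.

Local Notation proj := (proj A).
Local Notation sle := (sle Pos).
Local Notation pmeet := (pmeet A Pos).
Local Notation pjoin := (pjoin A Pos).

Lemma A_opp a : a \in A -> - a \in A.
Proof. by move=> Ha; rewrite -scaleN1r; apply: (sa_scale HA). Qed.

Lemma A_sub a b : a \in A -> b \in A -> a - b \in A.
Proof. by move=> Ha Hb; apply: (sa_add HA) => //; apply: A_opp. Qed.

Lemma A_mulC a b : a \in A -> b \in A -> a * b = b * a -> a * b \in A.
Proof.
move=> Ha Hb ab_ba.
have sqA c : c \in A -> c * c \in A by move=> Hc; apply/(sa_pos_sub HA)/(sa2 HA).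
have ab2 : (a * b) *+ 2 = (a + b) * (a + b) - (a * a + b * b).
  by rewrite mulrDl !mulrDr -ab_ba [a * b + b * b]addrC addrACA [RHS]addrC addKr mulr2n.
have -> : a * b = 2^-1 *: ((a * b) *+ 2).
  by rewrite -scaler_nat scalerA mulVf ?scale1r ?pnatr_eq0.
apply: (sa_scale HA); rewrite ab2; apply: A_sub; first exact/sqA/(sa_add HA).
exact: (sa_add HA) (sqA _ Ha) (sqA _ Hb).
Qed.

Lemma Pos0 : (0 : E) \in Pos.
Proof. by rewrite -(mulr0 0); apply/(sa2 HA)/(sa_0 HA). Qed.

Lemma sle_refl x : sle x x.
Proof. by rewrite /sle subrr Pos0. Qed.

Lemma sle_anti x y : sle x y -> sle y x -> x = y.
Proof.
rewrite /sle => xy yx; have := sa_pos_anti HA xy; rewrite opprB => /(_ yx) /eqP.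
by rewrite subr_eq0 => /eqP.
Qed.

Lemma sle_compl x y : sle x y -> sle (1 - y) (1 - x).
Proof. by rewrite /sle => yx; rewrite opprB addrC addrA subrK. Qed.

Lemma meet_in_eq (S : E -> Prop) x y m :
  is_glb Pos S x y m -> meet_in Pos S x y = m.
Proof.
move=> glb_m; have [_ [_ [_ m_greatest]]] := glb_m.
have [Sm' [m'x [m'y m'_greatest]]] := epsilon_spec (inhabits 0) _ (ex_intro _ m glb_m).
have [Sm [mx [my _]]] := glb_m.
by apply: sle_anti; [apply: m_greatest | apply: m'_greatest].
Qed.

Lemma join_in_eq (S : E -> Prop) x y m :
  is_lub Pos S x y m -> join_in Pos S x y = m.
Proof.
move=> lub_m; have [Sm [xm [ym m_least]]] := lub_m.
have [Sm' [xm' [ym' m'_least]]] := epsilon_spec (inhabits 0) _ (ex_intro _ m lub_m).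
by apply: sle_anti; [apply: m'_least | apply: m_least].
Qed.

Lemma proj_compl x : proj x -> proj (1 - x).
Proof.
case=> Ax xx; split; first exact/A_sub/Ax/(sa_1 HA).
by rewrite mulrBl mul1r mulrBr mulr1 xx subrr subr0.
Qed.

Lemma proj_pos x : proj x -> x \in Pos.
Proof. by case=> Ax xx; rewrite -xx; apply: (sa2 HA). Qed.

Lemma proj0 : proj 0.
Proof. by split; [apply: (sa_0 HA) | rewrite mulr0]. Qed.

Lemma proj_mulC x y : proj x -> proj y -> x * y = y * x -> proj (x * y).
Proof.
move=> [Ax xx] [Ay yy] xy_yx; split; first exact: A_mulC.
by rewrite mulrA -(mulrA x y x) -xy_yx mulrA xx -mulrA yy.
Qed.

Lemma proj_addO x y : proj x -> proj y -> x * y = 0 -> y * x = 0 -> proj (x + y).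
Proof.
move=> [Ax xx] [Ay yy] xy yx; split; first exact: (sa_add HA).
by rewrite mulrDl !mulrDr xx yy xy yx addr0 add0r.
Qed.

(* SA4 applied to (1 - y) x (1 - y) = 0 *)
Lemma proj_le_sym x y : proj x -> proj y -> x * y = x -> y * x = x.
Proof.
move=> px py xy_x; apply/eqP; rewrite eq_sym -subr_eq0 -{1}[x]mul1r -mulrBl; apply/eqP.
have ux : (1 - y) * x * (1 - y) = 0 by rewrite -mulrA mulrBr mulr1 xy_x subrr mulr0.
by case: (sa4 HA (proj_compl py).1 (proj_pos px) ux).
Qed.

Lemma proj_leP x y : proj x -> proj y -> sle x y <-> x * y = x.
Proof.
move=> px py; have [uA uu] := proj_compl py.
have uy : (1 - y) * y = 0 by rewrite mulrBl mul1r py.2 subrr.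
split=> [yx_pos | xy_x].
- have uxu_pos := sa3 HA (proj_pos (proj_compl py)) (proj_pos px).
  have : (1 - y) * (y - x) * (1 - y) \in Pos by apply: (sa3 HA) => //; apply: proj_pos.
  rewrite [_ * (y - x)]mulrBr uy sub0r mulNr => /(sa_pos_anti HA uxu_pos) uxu.
  case: (sa4 HA uA (proj_pos px) uxu) => _ /eqP.
  by rewrite mulrBr mulr1 subr_eq0 => /eqP.
- have yx_x := proj_le_sym px py xy_x.
  apply: proj_pos; split; first exact: A_sub py.1 px.1.
  by rewrite mulrBl !mulrBr py.2 px.2 yx_x xy_x subrr subr0.
Qed.

Lemma proj_le_mul x y : proj x -> proj y -> sle x y -> x * y = x /\ y * x = x.
Proof. by move=> px py /(proj_leP px py) xy_x; split=> //; apply: proj_le_sym. Qed.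

Lemma proj_orth a x y : proj a -> proj x -> proj y -> sle x a -> sle y (1 - a) ->
  x * y = 0 /\ y * x = 0.
Proof.
move=> pa px py xa ya.
have [xa_x ax_x] := proj_le_mul px pa xa.
have [ya_y ay_y] := proj_le_mul py (proj_compl pa) ya.
have a_ua : a * (1 - a) = 0 by rewrite mulrBr mulr1 pa.2 subrr.
have ua_a : (1 - a) * a = 0 by rewrite mulrBl mul1r pa.2 subrr.
split; first by rewrite -xa_x -ay_y mulrA -(mulrA x) a_ua mulr0 mul0r.
by rewrite -ya_y -ax_x mulrA -(mulrA y) ua_a mulr0 mul0r.
Qed.

(* the support projection of x + y, given by SA6, is their join *)
Lemma proj_lub_exists x y : proj x -> proj y -> exists c, is_lub Pos proj x y c.
Proof.
move=> px py.
have [c [Ac [cc ann_c]]] := sa6 HA ((sa_add HA) _ _ px.1 py.1).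
have pc : proj c by [].
have [uA _] := proj_compl pc.
have u_ann : (x + y) * (1 - c) = 0 by apply/(ann_c _ uA); rewrite mulrBr mulr1 cc subrr.
have Pu := proj_pos (proj_compl pc).
have [xux yuy] : (1 - c) * x * (1 - c) = 0 /\ (1 - c) * y * (1 - c) = 0.
  have uxu_pos := sa3 HA Pu (proj_pos px); have uyu_pos := sa3 HA Pu (proj_pos py).
  have sum0 : (1 - c) * x * (1 - c) + (1 - c) * y * (1 - c) = 0.
    by rewrite -mulrDl -mulrDr -mulrA u_ann mulr0.
  have uxu0 : (1 - c) * x * (1 - c) = 0.
    apply: (sa_pos_anti HA uxu_pos).
    by move/eqP: sum0; rewrite addr_eq0 => /eqP ->; rewrite opprK.
  by move: sum0; rewrite uxu0 add0r.
have le_c z : proj z -> (1 - c) * z * (1 - c) = 0 -> sle z c.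
  move=> pz /(sa4 HA uA (proj_pos pz)) [_ /eqP].
  by rewrite mulrBr mulr1 subr_eq0 => /eqP /esym /(proj_leP pz pc).
exists c; split=> //; split; first exact: le_c.
split; first exact: le_c.
move=> z pz /(proj_leP px pz) xz /(proj_leP py pz) yz; apply/(proj_leP pc pz).
apply/eqP; rewrite eq_sym -subr_eq0 -{1}[c]mulr1 -mulrBr; apply/eqP/(ann_c _ (proj_compl pz).1).
by rewrite mulrDl !mulrBr !mulr1 xz yz !subrr addr0.
Qed.

Lemma is_glb_compl x y c : is_lub Pos proj (1 - x) (1 - y) c ->
  is_glb Pos proj x y (1 - c).
Proof.
case=> pc [xc [yc c_least]]; split; first exact: proj_compl.
split; first by rewrite -[x](subKr 1); apply: sle_compl.
split; first by rewrite -[y](subKr 1); apply: sle_compl.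
move=> z pz zx zy; rewrite -[z](subKr 1); apply: sle_compl.
by apply: c_least; [apply: proj_compl | apply: sle_compl ..].
Qed.

Lemma is_lub_compl x y m : is_glb Pos proj (1 - x) (1 - y) m ->
  is_lub Pos proj x y (1 - m).
Proof.
case=> pm [mx [my m_greatest]]; split; first exact: proj_compl.
split; first by rewrite -[x](subKr 1); apply: sle_compl.
split; first by rewrite -[y](subKr 1); apply: sle_compl.
move=> z pz xz yz; rewrite -[z](subKr 1); apply: sle_compl.
by apply: m_greatest; [apply: proj_compl | apply: sle_compl ..].
Qed.

Lemma pmeet_glb x y : proj x -> proj y -> is_glb Pos proj x y (pmeet x y).
Proof.
move=> px py.
have [c lub_c] := proj_lub_exists (proj_compl px) (proj_compl py).
by rewrite /Defs.pmeet (meet_in_eq (is_glb_compl lub_c)); apply: is_glb_compl.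
Qed.

Lemma pmeet_proj x y : proj x -> proj y -> proj (pmeet x y).
Proof. by move=> px py; case: (pmeet_glb px py). Qed.

Lemma pjoin_compl x y : proj x -> proj y -> pjoin x y = 1 - pmeet (1 - x) (1 - y).
Proof.
move=> px py; apply: join_in_eq; apply: is_lub_compl.
exact: pmeet_glb (proj_compl px) (proj_compl py).
Qed.

Lemma pmeetC x y : proj x -> proj y -> pmeet x y = pmeet y x.
Proof.
move=> px py; apply: meet_in_eq.
have [pm [my [mx m_greatest]]] := pmeet_glb py px.
by split=> //; split=> //; split=> // z pz zx zy; apply: m_greatest.
Qed.

Lemma pjoinC x y : proj x -> proj y -> pjoin x y = pjoin y x.
Proof.
by move=> px py; rewrite !pjoin_compl // pmeetC //; apply: proj_compl.
Qed.

Lemma pmeet_mulC x y : proj x -> proj y -> x * y = y * x -> pmeet x y = x * y.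
Proof.
move=> px py xy_yx; apply: meet_in_eq; split; first exact: proj_mulC.
have pxy := proj_mulC px py xy_yx.
split; first by apply/(proj_leP pxy px); rewrite xy_yx -mulrA px.2.
split; first by apply/(proj_leP pxy py); rewrite -mulrA py.2.
move=> z pz /(proj_leP pz px) zx /(proj_leP pz py) zy.
by apply/(proj_leP pz pxy); rewrite mulrA zx zy.
Qed.

Lemma pmeet_compl_orth x y : proj x -> proj y -> x * y = 0 -> y * x = 0 ->
  pmeet (1 - x) (1 - y) = 1 - (x + y).
Proof.
move=> px py xy yx; rewrite (pmeet_mulC (proj_compl px) (proj_compl py)).
  by rewrite mulrBl mul1r mulrBr mulr1 xy subr0 opprD addrA addrAC.
by rewrite !mulrBl !mul1r !mulrBr !mulr1 xy yx !subr0 addrAC.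
Qed.

Lemma pmeet_compl_le a x : proj a -> proj x -> sle x a -> pmeet a (1 - x) = a - x.
Proof.
move=> pa px /(proj_le_mul px pa) [xa_x ax_x].
rewrite (pmeet_mulC pa (proj_compl px)); first by rewrite mulrBr mulr1 ax_x.
by rewrite mulrBr mulrBl mulr1 mul1r ax_x xa_x.
Qed.

Lemma meet_Pint_eq0 r a b : proj r -> proj a -> proj b ->
  a * r = r * a -> b * r = r * b -> r * pmeet a b = 0 ->
  meet_in Pos (Pint A Pos r) (a * r) (b * r) = 0.
Proof.
move=> pr pa pb ar_ra br_rb r_ab.
have par := proj_mulC pa pr ar_ra; have pbr := proj_mulC pb pr br_rb.
have below z c : proj z -> proj c -> c * r = r * c -> sle z (c * r) -> z * c = z.
  move=> pz pc cr_rc /(proj_leP pz (proj_mulC pc pr cr_rc)) zcr.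
  by rewrite -{1}zcr -!mulrA -cr_rc (mulrA c c r) pc.2 zcr.
apply: meet_in_eq; split.
  by split; [apply: proj0 | rewrite /sle subr0; apply: proj_pos].
split; first by rewrite /sle subr0; apply: proj_pos.
split; first by rewrite /sle subr0; apply: proj_pos.
move=> z [pz /(proj_leP pz pr) zr] za zb.
have [_ [_ [_ ab_greatest]]] := pmeet_glb pa pb.
have /(proj_leP pz (pmeet_proj pa pb)) zab : sle z (pmeet a b).
  by apply: ab_greatest => //; apply/(proj_leP pz) => //; apply: below.
rewrite -zab -zr -mulrA r_ab mulr0; exact: sle_refl.
Qed.

Lemma pjoin_proj x y : proj x -> proj y -> proj (pjoin x y).
Proof.
by move=> px py; rewrite pjoin_compl //; apply/proj_compl/pmeet_proj; apply: proj_compl.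
Qed.

Definition side (x : E) (a : bool) := if a then x else 1 - x.

Lemma proj_side x a : proj x -> proj (side x a).
Proof. by case: a => //; apply: proj_compl. Qed.

Lemma side_neq x a a' : a != a' -> side x a' = 1 - side x a.
Proof. by case: a a' => [] [] //= _; rewrite subKr. Qed.

Definition generic_part p q :=
  pmeet (pmeet (pmeet (pjoin p q) (pjoin p (pcompl q))) (pjoin (pcompl p) q))
        (pjoin (pcompl p) (pcompl q)).

Definition generic_comp p q :=
  pmeet (pmeet p (pjoin (pcompl p) q)) (pjoin (pcompl p) (pcompl q)).

Section Corners.
Variables p q : E.
Hypotheses (hp : proj p) (hq : proj q).

Definition corner a b := pmeet (side p a) (side q b).

Definition corners := \sum_(a : bool) \sum_(b : bool) corner a b.

Lemma corner_proj a b : proj (corner a b).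
Proof. by apply: pmeet_proj; apply: proj_side. Qed.

Lemma corner_le a b : sle (corner a b) (side p a) /\ sle (corner a b) (side q b).
Proof. by have [_ [ma [mb _]]] := pmeet_glb (proj_side a hp) (proj_side b hq). Qed.

Lemma corner_orth a b a' b' : (a != a') || (b != b') -> corner a b * corner a' b' = 0.
Proof.
have [ca cb] := corner_le a b; have [ca' cb'] := corner_le a' b'.
case/orP=> [/(side_neq p) ne | /(side_neq q) ne].
  rewrite ne in ca'.
  by case: (proj_orth (proj_side a hp) (corner_proj _ _) (corner_proj _ _) ca ca').
rewrite ne in cb'.
by case: (proj_orth (proj_side b hq) (corner_proj _ _) (corner_proj _ _) cb cb').
Qed.

Lemma corners_mul_corner a b : corners * corner a b = corner a b.
Proof.
rewrite /corners mulr_suml (bigD1 a) //= [X in _ + X]big1 => [|a' ne]; last first.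
  by rewrite mulr_suml big1 // => b' _; apply: corner_orth; rewrite ne.
rewrite addr0 mulr_suml (bigD1 b) //= [X in _ + X]big1 => [|b' ne]; last first.
  by apply: corner_orth; rewrite ne orbT.
by rewrite addr0 (corner_proj a b).2.
Qed.

Lemma mul_corner_l a b : p * corner a b = if a then corner a b else 0.
Proof.
have [ca _] := corner_le a b; case: a ca => ca.
  by case: (proj_le_mul (corner_proj _ _) hp ca).
by case: (proj_orth hp hp (corner_proj _ _) (sle_refl p) ca).
Qed.

Lemma mul_corner_r a b : corner a b * p = if a then corner a b else 0.
Proof.
have [ca _] := corner_le a b; case: a ca => ca.
  by case: (proj_le_mul (corner_proj _ _) hp ca).
by case: (proj_orth hp hp (corner_proj _ _) (sle_refl p) ca).
Qed.

Lemma mul_corners : p * corners = \sum_b corner true b.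
Proof.
rewrite /corners mulr_sumr big_bool /= !mulr_sumr.
rewrite (eq_bigr _ (fun b _ => mul_corner_l true b)).
by rewrite (eq_bigr _ (fun b _ => mul_corner_l false b)) big1_eq addr0.
Qed.

Lemma corners_mul : corners * p = \sum_b corner true b.
Proof.
rewrite /corners mulr_suml big_bool /= !mulr_suml.
rewrite (eq_bigr _ (fun b _ => mul_corner_r true b)).
by rewrite (eq_bigr _ (fun b _ => mul_corner_r false b)) big1_eq addr0.
Qed.

Lemma generic_partE : generic_part p q = 1 - corners.
Proof.
have [hp' hq'] := (proj_compl hp, proj_compl hq).
rewrite /generic_part /pcompl (pjoin_compl hp hq) (pjoin_compl hp hq') (pjoin_compl hp' hq).
rewrite (pjoin_compl hp' hq') !subKr.
have c00 := corner_proj false false; have c01 := corner_proj false true.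
have c10 := corner_proj true false; have c11 := corner_proj true true.
have o := corner_orth.
have c0x := proj_addO c00 c01 (o false false false true isT) (o false true false false isT).
have c0x1 : proj (corner false false + corner false true + corner true false).
  by apply: proj_addO; rewrite ?mulrDl ?mulrDr ?o ?addr0.
rewrite (pmeet_compl_orth c00 c01) ?o //.
rewrite (pmeet_compl_orth c0x c10) ?mulrDl ?mulrDr ?o ?addr0 //.
rewrite (pmeet_compl_orth c0x1 c11) ?mulrDl ?mulrDr ?o ?addr0 //.
congr (1 - _); rewrite /corners !big_bool /= [RHS]addrC.
by rewrite [corner false true + _]addrC [corner true true + _]addrC !addrA.
Qed.

Lemma proj_generic_part : proj (generic_part p q).
Proof.
have [hp' hq'] := (proj_compl hp, proj_compl hq).
by rewrite /generic_part; repeat apply: pmeet_proj; apply: pjoin_proj.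
Qed.

Lemma generic_part_commute : p * generic_part p q = generic_part p q * p.
Proof. by rewrite generic_partE mulrBr mulrBl mulr1 mul1r mul_corners corners_mul. Qed.

Lemma generic_part_mul_corner a b : generic_part p q * corner a b = 0.
Proof. by rewrite generic_partE mulrBl mul1r corners_mul_corner subrr. Qed.

Lemma generic_compE : generic_comp p q = p * generic_part p q.
Proof.
have [c10 c11] := (corner_proj true false, corner_proj true true).
rewrite /generic_comp /pcompl (pjoin_compl (proj_compl hp) hq).
rewrite (pjoin_compl (proj_compl hp) (proj_compl hq)) !subKr.
rewrite (pmeet_compl_le hp c10 (corner_le true false).1).
have p_c10 : proj (p - corner true false).
  by rewrite -(pmeet_compl_le hp c10 (corner_le true false).1); apply/pmeet_proj/proj_compl.
rewrite (pmeet_compl_le p_c10 c11); last first.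
  apply/(proj_leP c11 p_c10); rewrite mulrBr corner_orth //.
  by rewrite subr0; case: (proj_le_mul c11 hp (corner_le true true).1).
rewrite generic_partE mulrBr mulr1 mul_corners big_bool /=.
by rewrite opprD addrA [_ - corner true true]addrAC.
Qed.

End Corners.

Lemma corners_sym p q : proj p -> proj q -> corners q p = corners p q.
Proof.
move=> hp hq; rewrite /corners exchange_big; apply: eq_bigr => a _.
by apply: eq_bigr => b _; apply: pmeetC; apply: proj_side.
Qed.

Lemma generic_part_sym p q : proj p -> proj q -> generic_part q p = generic_part p q.
Proof. by move=> hp hq; rewrite !generic_partE // corners_sym. Qed.

Lemma generic_part_commute_r p q : proj p -> proj q ->
  q * generic_part p q = generic_part p q * q.
Proof. by move=> hp hq; rewrite -generic_part_sym //; apply: generic_part_commute. Qed.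

Lemma generic_compE_r p q : proj p -> proj q ->
  pmeet (pmeet q (pjoin p (pcompl q))) (pjoin (pcompl p) (pcompl q)) = q * generic_part p q.
Proof.
move=> hp hq; rewrite /pcompl (pjoinC hp (proj_compl hq)).
rewrite (pjoinC (proj_compl hp) (proj_compl hq)) -generic_part_sym //.
exact: (generic_compE hq hp).
Qed.

Lemma Pint_mulC r x : proj r -> proj x -> x * r = r * x -> Pint A Pos r (x * r).
Proof.
move=> pr px xr_rx; have pxr := proj_mulC px pr xr_rx.
by split=> //; apply/(proj_leP pxr pr); rewrite -mulrA pr.2.
Qed.

Lemma generic_in_generic_part p q : proj p -> proj q ->
  generic_in A Pos (generic_part p q) (p * generic_part p q) (q * generic_part p q).
Proof.
move=> hp hq; have pr := proj_generic_part hp hq.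
have [hp' hq'] := (proj_compl hp, proj_compl hq).
have [pr_rp qr_rq] := (generic_part_commute hp hq, generic_part_commute_r hp hq).
have r_corner := generic_part_mul_corner hp hq.
set r := generic_part p q in pr pr_rp qr_rq r_corner *.
have compl_mul x : r - x * r = (1 - x) * r by rewrite mulrBl mul1r.
have compl_commute x : x * r = r * x -> (1 - x) * r = r * (1 - x).
  by move=> xr_rx; rewrite mulrBl mulrBr mul1r mulr1 xr_rx.
have [cp' cq'] := (compl_commute p pr_rp, compl_commute q qr_rq).
rewrite /generic_in !compl_mul.
split; first exact: (meet_Pint_eq0 pr hp hq pr_rp qr_rq (r_corner true true)).
split; first exact: (meet_Pint_eq0 pr hp hq' pr_rp cq' (r_corner true false)).
split; first exact: (meet_Pint_eq0 pr hp' hq cp' qr_rq (r_corner false true)).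
exact: (meet_Pint_eq0 pr hp' hq' cp' cq' (r_corner false false)).
Qed.

End Synaptic.

Theorem theorem6p4 (R : realType) (E : algType R) (A Pos : {pred E})
  (HA : synaptic A Pos) (p q : E) (hp : proj A p) (hq : proj A q) :
  let meet := pmeet A Pos in
  let join := pjoin A Pos in
  let r := meet (meet (meet (join p q) (join p (pcompl q))) 
                      (join (pcompl p) q)) (join (pcompl p) (pcompl q)) in
  let rp := meet (meet p (join (pcompl p) q)) (join (pcompl p) (pcompl q)) in
  let rq := meet (meet q (join p (pcompl q))) (join (pcompl p) (pcompl q)) in
  (rp = p * r /\ p * r = r * p /\ r * p = meet r p) /\
  (rq = q * r /\ q * r = r * q /\ r * q = meet r q) /\
  (Pint A Pos r rp /\ Pint A Pos r rq) /\
  generic_in A Pos r rp rq.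
Proof.
move=> meet join r rp rq.
have pr : proj A r := proj_generic_part HA hp hq.
have pr_rp : p * r = r * p := generic_part_commute HA hp hq.
have qr_rq : q * r = r * q := generic_part_commute_r HA hp hq.
have rpE : rp = p * r := generic_compE HA hp hq.
have rqE : rq = q * r := generic_compE_r HA hp hq.
have gen : generic_in A Pos r (p * r) (q * r) := generic_in_generic_part HA hp hq.
clearbody r rp rq; subst rp rq.
rewrite /meet (pmeet_mulC HA pr hp (esym pr_rp)) (pmeet_mulC HA pr hq (esym qr_rq)).
do 2 (split; first by do !split).
by split=> //; split; apply: Pint_mulC.
Qed.
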